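(* For each $i\in\{1,2,3\}$, $P_i'=2P_i''-M$, i.e. $P_i''$ is the midpoint of $MP_i'$. Hence $T'=P_1'P_2'P_3'$ is the image of $T''=P_1''P_2''P_3''$ under the homothety with center $M$ and ratio $2$, and the area of $T''$ equals $\frac{27\sqrt3}{64}\frac{c^4}{ab}$ (one quarter of the area of $T'$), independent of $u$.
   Context: Let $a>b>0$ and $c>0$ with $c^2=a^2-b^2$. Let $\mathcal{E}$ be the ellipse $x^2/a^2+y^2/b^2=1$, parametrized by $P(t)=(a\cos t,b\sin t)$. Fix $u\in\mathbb{R}$, let $M=(a\cos u,b\sin u)$ and $\Delta_u(t)=(x_u(t),y_u(t))$, where $x_u(t)=\frac1a\big(c^2(1+\cos(t+u))\cos t-a^2\cos u\big)$ and $y_u(t)=\frac1b\big(c^2\cos t\sin(t+u)-c^2\sin t-a^2\sin u\big)$ (the negative pedal curve of $\mathcal{E}$ with respect to $M$). For $i=1,2,3$ let $t_i=-u/3-2\pi(i-1)/3$, $P_i'=\Delta_u(t_i)$ (the cusps), and $P_i''=\left(\frac{c^2\cos^3 t_i}{a},-\frac{c^2\sin^3 t_i}{b}\right)$ (the center of curvature of $\mathcal{E}$ at $P(t_i)$). *)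

From Stdlib Require Import Reals.
Open Scope R_scope.

(* Negative pedal curve Delta_u(t) = (x_u(t), y_u(t)) of the ellipse
   x^2/a^2 + y^2/b^2 = 1 w.r.t. M = (a cos u, b sin u), c^2 = a^2 - b^2. *)
Definition xu (a b c u t : R) : R :=
  / a * (c ^ 2 * (1 + cos (t + u)) * cos t - a ^ 2 * cos u).
Definition yu (a b c u t : R) : R :=
  / b * (c ^ 2 * cos t * sin (t + u) - c ^ 2 * sin t - a ^ 2 * sin u).

Definition tcusp (u : R) (i : nat) : R :=
  - u / 3 - 2 * PI * (INR i - 1) / 3.

Definition Mpt (a b u : R) : R * R := (a * cos u, b * sin u).

Definition Pcusp (a b c u : R) (i : nat) : R * R :=
  (xu a b c u (tcusp u i), yu a b c u (tcusp u i)).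

(* center of curvature P_i'' of the ellipse at P(t_i) *)
Definition Pcurv (a b c u : R) (i : nat) : R * R :=
  (c ^ 2 * cos (tcusp u i) ^ 3 / a, - (c ^ 2 * sin (tcusp u i) ^ 3) / b).

Definition homothety (O : R * R) (k : R) (P : R * R) : R * R :=
  (fst O + k * (fst P - fst O), snd O + k * (snd P - snd O)).

Definition tri_area (P1 P2 P3 : R * R) : R :=
  Rabs ((fst P2 - fst P1) * (snd P3 - snd P1)
        - (fst P3 - fst P1) * (snd P2 - snd P1)) / 2.

From Stdlib Require Import Reals Lra Lia.
Open Scope R_scope.

(* A parameter t is a cusp parameter of the negative pedal curve Delta_u
   when 3t + u is a multiple of 2 pi, i.e. cos (3t + u) = 1; the t_i are
   such parameters.  For a cusp parameter, t + u = -2t and u = -3t modulo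
   2 pi, and with the triple-angle formulas the coordinates of Delta_u(t)
   collapse to 2 (c^2 cos^3 t / a, - c^2 sin^3 t / b) - M: the centre of
   curvature is the midpoint of M and the cusp.  The same formulas
   linearise that centre into (c^2 (3 cos t + cos u) / (4a),
   - c^2 (3 sin t + sin u) / (4b)), so T'' is the image of the equilateral
   triangle inscribed in the unit circle at angles t_1, t_1 - 2pi/3,
   t_1 - 4pi/3 (area 3 sqrt 3 / 4) under an axis-parallel affine map of
   determinant - 9 c^4 / (16 a b).  Axis-parallel affine maps multiply
   triangle areas by |det|; homotheties of ratio 2 are such maps with
   |det| = 4, which gives the comparison between T' and T''. *)

Lemma cos_3a (x : R) : cos (3 * x) = 4 * cos x ^ 3 - 3 * cos x.
Proof.
  replace (3 * x) with (2 * x + x) by ring.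
  rewrite cos_plus, cos_2a, sin_2a.
  pose proof (sin2_cos2 x) as Hpyth; unfold Rsqr in Hpyth.
  ring_simplify.
  replace (sin x ^ 2) with (1 - cos x ^ 2) by lra.
  ring.
Qed.

Lemma sin_3a (x : R) : sin (3 * x) = 3 * sin x - 4 * sin x ^ 3.
Proof.
  replace (3 * x) with (2 * x + x) by ring.
  rewrite sin_plus, cos_2a, sin_2a.
  pose proof (sin2_cos2 x) as Hpyth; unfold Rsqr in Hpyth.
  ring_simplify.
  replace (cos x ^ 2) with (1 - sin x ^ 2) by lra.
  ring.
Qed.

Definition cusp_param (u t : R) : Prop := cos (3 * t + u) = 1.

Lemma tcusp_cusp_param (u : R) (i : nat) : (1 <= i)%nat -> cusp_param u (tcusp u i).
Proof.
  intros Hi; unfold cusp_param, tcusp.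
  replace (3 * (- u / 3 - 2 * PI * (INR i - 1) / 3) + u)
    with (- (0 + 2 * INR (i - 1) * PI))
    by (rewrite minus_INR by exact Hi; simpl; field).
  now rewrite cos_neg, cos_period, cos_0.
Qed.

Section CuspParameter.

Variables u t : R.
Hypothesis Hcusp : cusp_param u t.

Lemma cusp_param_sin : sin (3 * t + u) = 0.
Proof.
  pose proof (sin2_cos2 (3 * t + u)) as Hpyth; unfold Rsqr in Hpyth.
  unfold cusp_param in Hcusp; rewrite Hcusp in Hpyth; nra.
Qed.

Lemma cusp_param_u : cos u = cos (3 * t) /\ sin u = - sin (3 * t).
Proof.
  replace u with ((3 * t + u) - 3 * t) by ring.
  rewrite cos_minus, sin_minus, cusp_param_sin, Hcusp.
  split; ring.
Qed.

Lemma cusp_param_tu : cos (t + u) = cos (2 * t) /\ sin (t + u) = - sin (2 * t).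
Proof.
  replace (t + u) with ((3 * t + u) - 2 * t) by ring.
  rewrite cos_minus, sin_minus, cusp_param_sin, Hcusp.
  split; ring.
Qed.

Lemma cusp_midpoint (a b c : R) :
  a <> 0 -> b <> 0 -> c ^ 2 = a ^ 2 - b ^ 2 ->
  xu a b c u t = 2 * (c ^ 2 * cos t ^ 3 / a) - a * cos u /\
  yu a b c u t = 2 * (- (c ^ 2 * sin t ^ 3) / b) - b * sin u.
Proof.
  intros Ha Hb Hc.
  destruct cusp_param_tu as [Hcos_tu Hsin_tu].
  destruct cusp_param_u as [_ Hsin_u].
  pose proof (sin2_cos2 t) as Hpyth; unfold Rsqr in Hpyth.
  unfold xu, yu; rewrite Hcos_tu, Hsin_tu, cos_2a_cos, sin_2a.
  split.
  - field; exact Ha.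
  - apply (Rmult_eq_reg_l b); [| exact Hb].
    field_simplify; [| exact Hb | exact Hb].
    rewrite Hsin_u, sin_3a.
    replace (b ^ 2) with (a ^ 2 - c ^ 2) by lra.
    replace (cos t ^ 2) with (1 - sin t ^ 2) by lra.
    ring.
Qed.

Lemma curv_centre_linear (a b c : R) :
  a <> 0 -> b <> 0 ->
  (c ^ 2 * cos t ^ 3 / a, - (c ^ 2 * sin t ^ 3) / b)
  = (c ^ 2 * cos u / (4 * a) + 3 * c ^ 2 / (4 * a) * cos t,
     - (c ^ 2 * sin u) / (4 * b) + - (3 * c ^ 2) / (4 * b) * sin t).
Proof.
  intros Ha Hb.
  destruct cusp_param_u as [-> ->].
  rewrite cos_3a, sin_3a.
  f_equal; field; auto.
Qed.

End CuspParameter.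

Definition diag_affine (x0 y0 alpha beta : R) (P : R * R) : R * R :=
  (x0 + alpha * fst P, y0 + beta * snd P).

Lemma tri_area_diag_affine (x0 y0 alpha beta : R) (P1 P2 P3 : R * R) :
  tri_area (diag_affine x0 y0 alpha beta P1) (diag_affine x0 y0 alpha beta P2)
           (diag_affine x0 y0 alpha beta P3)
  = Rabs (alpha * beta) * tri_area P1 P2 P3.
Proof.
  unfold tri_area, diag_affine; simpl.
  match goal with |- Rabs ?X / 2 = Rabs ?k * (Rabs ?Y / 2) =>
    replace X with (k * Y) by ring end.
  rewrite Rabs_mult; field.
Qed.

Lemma tri_area_homothety (O : R * R) (k : R) (P1 P2 P3 : R * R) :
  tri_area (homothety O k P1) (homothety O k P2) (homothety O k P3)
  = k ^ 2 * tri_area P1 P2 P3.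
Proof.
  assert (Hhom : forall P, homothety O k P
                  = diag_affine ((1 - k) * fst O) ((1 - k) * snd O) k k P)
    by (intros P; unfold homothety, diag_affine; f_equal; ring).
  rewrite !Hhom, tri_area_diag_affine.
  f_equal; rewrite <- Rsqr_pow2; unfold Rsqr; apply Rabs_pos_eq, Rle_0_sqr.
Qed.

Definition unit_pt (theta : R) : R * R := (cos theta, sin theta).

Lemma tri_area_unit_equilateral (theta : R) :
  tri_area (unit_pt theta) (unit_pt (theta - 2 * PI / 3))
           (unit_pt (theta - 4 * PI / 3))
  = 3 * sqrt 3 / 4.
Proof.
  assert (H2 : cos (2 * PI / 3) = - / 2 /\ sin (2 * PI / 3) = sqrt 3 / 2).
  { replace (2 * PI / 3) with (PI - PI / 3) by field.
    rewrite Rtrigo_facts.cos_pi_minus, sin_PI_x, cos_PI3, sin_PI3.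
    split; field. }
  assert (H4 : cos (4 * PI / 3) = - / 2 /\ sin (4 * PI / 3) = - (sqrt 3 / 2)).
  { replace (4 * PI / 3) with (PI / 3 + PI) by field.
    rewrite neg_cos, neg_sin, cos_PI3, sin_PI3.
    split; field. }
  unfold tri_area, unit_pt; simpl.
  rewrite !cos_minus, !sin_minus.
  destruct H2 as [-> ->], H4 as [-> ->].
  pose proof (sin2_cos2 theta) as Hpyth; unfold Rsqr in Hpyth.
  assert (Hsqrt3 : 0 < sqrt 3) by (apply sqrt_lt_R0; lra).
  match goal with |- Rabs ?X / 2 = _ =>
    replace X with (- (3 * sqrt 3 / 2 * (sin theta * sin theta + cos theta * cos theta)))
      by field end.
  rewrite Hpyth, Rmult_1_r, Rabs_Ropp, Rabs_pos_eq by lra.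
  field.
Qed.

Lemma Pcurv_affine (a b c u : R) (i : nat) :
  a <> 0 -> b <> 0 -> (1 <= i)%nat ->
  Pcurv a b c u i
  = diag_affine (c ^ 2 * cos u / (4 * a)) (- (c ^ 2 * sin u) / (4 * b))
                (3 * c ^ 2 / (4 * a)) (- (3 * c ^ 2) / (4 * b))
                (unit_pt (tcusp u i)).
Proof.
  intros Ha Hb Hi.
  apply (curv_centre_linear u (tcusp u i) (tcusp_cusp_param u i Hi)); assumption.
Qed.

Lemma area_Pcurv (a b c u : R) :
  a > 0 -> b > 0 ->
  tri_area (Pcurv a b c u 1) (Pcurv a b c u 2) (Pcurv a b c u 3)
  = 27 * sqrt 3 / 64 * (c ^ 4 / (a * b)).
Proof.
  intros Ha Hb.
  rewrite !Pcurv_affine by (lra || lia).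
  replace (tcusp u 2) with (tcusp u 1 - 2 * PI / 3) by (unfold tcusp; simpl; field).
  replace (tcusp u 3) with (tcusp u 1 - 4 * PI / 3) by (unfold tcusp; simpl; field).
  rewrite tri_area_diag_affine, tri_area_unit_equilateral.
  replace (3 * c ^ 2 / (4 * a) * (- (3 * c ^ 2) / (4 * b)))
    with (- (9 / 16 * (c ^ 4 / (a * b)))) by (field; lra).
  assert (Hc4 : 0 <= c ^ 4 / (a * b)).
  { replace (c ^ 4) with ((c ^ 2) ^ 2) by ring.
    apply Rmult_le_pos; [apply pow2_ge_0 |].
    left; apply Rinv_0_lt_compat; nra. }
  rewrite Rabs_Ropp, Rabs_pos_eq by lra.
  field; nra.
Qed.

Lemma Pcusp_homothety (a b c u : R) (i : nat) :
  a <> 0 -> b <> 0 -> c ^ 2 = a ^ 2 - b ^ 2 -> (1 <= i)%nat ->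
  Pcusp a b c u i = homothety (Mpt a b u) 2 (Pcurv a b c u i).
Proof.
  intros Ha Hb Hc Hi.
  destruct (cusp_midpoint u (tcusp u i) (tcusp_cusp_param u i Hi) a b c Ha Hb Hc)
    as [Hx Hy].
  unfold Pcusp, homothety, Pcurv, Mpt; simpl fst; simpl snd.
  rewrite Hx, Hy; f_equal; field; assumption.
Qed.

Theorem proposition7p1 (a b c u : R) :
  a > b -> b > 0 -> c > 0 -> c ^ 2 = a ^ 2 - b ^ 2 ->
  (forall i : nat, (1 <= i <= 3)%nat ->
     Pcusp a b c u i =
       (2 * fst (Pcurv a b c u i) - fst (Mpt a b u),
        2 * snd (Pcurv a b c u i) - snd (Mpt a b u))
     /\ Pcusp a b c u i = homothety (Mpt a b u) 2 (Pcurv a b c u i))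
  /\ tri_area (Pcurv a b c u 1) (Pcurv a b c u 2) (Pcurv a b c u 3)
       = 27 * sqrt 3 / 64 * (c ^ 4 / (a * b))
  /\ tri_area (Pcurv a b c u 1) (Pcurv a b c u 2) (Pcurv a b c u 3)
       = / 4 * tri_area (Pcusp a b c u 1) (Pcusp a b c u 2) (Pcusp a b c u 3).
Proof.
  intros Hab Hb _ Hc.
  assert (Hhom : forall i, (1 <= i)%nat ->
            Pcusp a b c u i = homothety (Mpt a b u) 2 (Pcurv a b c u i))
    by (intros i Hi; apply Pcusp_homothety; lra || assumption).
  split; [| split].
  - intros i [Hi _]; split; [| exact (Hhom i Hi)].
    rewrite (Hhom i Hi); unfold homothety; f_equal; ring.
  - apply area_Pcurv; lra.
  - rewrite !Hhom by lia.
    rewrite tri_area_homothety.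
    field.
Qed.
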